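(* Fix a base $\beta\ge2$, let $0<C<1$, and suppose the mantissa length $t$ satisfies $$t\ \ge\ 1+\log_\beta\!\Big[\frac{(1+C)(4+5C)}{C}\sum_{m=1}^{n-1}\sum_{\ell=1}^{n-m}g\big[\mathbf{CP}_\ell(\mathbb{R})\big]\,g\big[\mathbf{CP}_m(\mathbb{R})\big]\Big].$$ Then $G\big[\widehat{\mathbf{CP}}_n(\mathbb{R})\big]\le(1+C)\,g\big[\mathbf{CP}_n(\mathbb{R})\big]$.
   Context: Exact Gaussian elimination without pivoting on $A=(a_{i,j})$: $a^{(1)}_{i,j}=a_{i,j}$, $a^{(k+1)}_{i,j}=a^{(k)}_{i,j}-a^{(k)}_{i,k}a^{(k)}_{k,j}/a^{(k)}_{k,k}$ for $k+1\le i,j\le n$; $g(A)=\max_{i,j,k}|a^{(k)}_{i,j}|/\max_{i,j}|a_{i,j}|$; $\mathbf{CP}_n(\mathbb{R})$ is the set of invertible real $n\times n$ matrices for which this is defined and $|a^{(k)}_{i,j}|\le|a^{(k)}_{k,k}|$ for all $k$, $i,j\ge k$; $g[\mathbf{X}]=\sup_{A\in\mathbf{X}}g(A)$. Floating-point model with base $\beta$, mantissa length $t$, unit roundoff $u=\beta^{1-t}/2$ (overflow/underflow ignored): a floating-point elimination run on a real $n\times n$ matrix $A$ is an array $\hat a^{(k)}_{i,j}$ with $\hat a^{(1)}_{i,j}=a_{i,j}(1+\phi^{(0)}_{i,j})$, $\hat a^{(k+1)}_{i,j}=\big[\hat a^{(k)}_{i,j}-s_{i,k}\hat a^{(k)}_{k,j}(1+\theta^{(k)}_{i,j})\big](1+\phi^{(k)}_{i,j})$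 for $k+1\le i,j\le n$, where $s_{i,k}=\frac{\hat a^{(k)}_{i,k}}{\hat a^{(k)}_{k,k}}(1+\varphi_{i,k})$, for some parameters with $|\theta^{(k)}_{i,j}|,|\phi^{(k)}_{i,j}|,|\varphi_{i,k}|\le u$, and with $|s_{i,k}|\le 1$, $|s_{i,k}(1+\theta^{(k)}_{i,j})|\le1$. $\widehat{\mathbf{CP}}_n(\mathbb{R})$ consists of (invertible real $A$, run) pairs with all $\hat a^{(k)}_{k,k}\ne0$ and $|\hat a^{(k)}_{i,j}|\le|\hat a^{(k)}_{k,k}|$ for all $k$ and $i,j\ge k$. The floating-point growth factor is $G(A)=\max_{i,j,k}|\hat a^{(k)}_{i,j}|/\max_{i,j}|\hat a^{(1)}_{i,j}|$ and $G[\widehat{\mathbf{CP}}_n(\mathbb{R})]$ is its supremum over $\widehat{\mathbf{CP}}_n(\mathbb{R})$. *)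

From HB Require Import structures.
From mathcomp Require Import all_boot all_order all_algebra.
From mathcomp Require Import all_classical all_reals.
From mathcomp Require Import ereal.
Set Implicit Arguments. Unset Strict Implicit. Unset Printing Implicit Defensive.
Import Order.TTheory GRing.Theory Num.Theory.
Local Open Scope ring_scope.
Local Open Scope classical_set_scope.

(* All indices are 0-based: rows/columns 0..n-1, elimination stages 0..n-1.
   Stage k (0-based) corresponds to the paper's a^{(k+1)}; it is only
   meaningful for entries k <= i,j < n. *)

Section GE.
Variable R : realType.

Definition mxf (n : nat) (A : 'M[R]_n) (i j : nat) : R :=
  match (insub i : option 'I_n), (insub j : option 'I_n) with
  | Some i', Some j' => A i' j'
  | _, _ => 0
  end.

(* exact Gaussian elimination without pivoting: ge A k i j = a^{(k+1)}_{i+1,j+1} *)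
Fixpoint ge (n : nat) (A : 'M[R]_n) (k : nat) : nat -> nat -> R :=
  match k with
  | 0 => mxf A
  | k'.+1 => fun i j =>
      let a := ge A k' in a i j - a i k' * a k' j / a k' k'
  end.

Definition maxstage (n : nat) (f : nat -> nat -> nat -> R) : R :=
  \big[Num.max/0]_(k < n) \big[Num.max/0]_(i < n | (k <= i)%N)
     \big[Num.max/0]_(j < n | (k <= j)%N) `|f k i j|.

Definition maxentry (n : nat) (a : nat -> nat -> R) : R :=
  \big[Num.max/0]_(i < n) \big[Num.max/0]_(j < n) `|a i j|.

Definition growth (n : nat) (A : 'M[R]_n) : R :=
  maxstage n (ge A) / maxentry n (mxf A).

(* CP_n(R): invertible, elimination defined (pivots used as divisors nonzero),
   completely pivoted: |a^{(k)}_{ij}| <= |a^{(k)}_{kk}| *)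
Definition CP (n : nat) (A : 'M[R]_n) : Prop :=
  A \in unitmx /\
  (forall k : nat, (k.+1 < n)%N -> ge A k k k != 0) /\
  (forall k i j : nat, (k <= i < n)%N -> (k <= j < n)%N ->
     `|ge A k i j| <= `|ge A k k k|).

Definition gCP (n : nat) : \bar R :=
  ereal_sup [set (growth A)%:E | A in [set A : 'M[R]_n | CP A]].

Definition unit_roundoff (beta t : nat) : R :=
  (beta%:R : R) ^ (1 - t%:Z) / 2.

Definition fp_mult (ah : nat -> nat -> nat -> R) (vphi : nat -> nat -> R)
  (i k : nat) : R :=
  ah k i k / ah k k k * (1 + vphi i k).

(* ah is a floating-point elimination run on A (base beta, mantissa t):
   ah k i j = \hat a^{(k+1)}_{i+1,j+1}, phi k = \phi^{(k)}, theta k = \theta^{(k+1)},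
   vphi i k = \varphi_{i+1,k+1}. *)
Definition fp_run (beta t n : nat) (A : 'M[R]_n)
  (ah : nat -> nat -> nat -> R) : Prop :=
  exists (theta phi : nat -> nat -> nat -> R) (vphi : nat -> nat -> R),
    let u := unit_roundoff beta t in
    (forall i j : nat, (i < n)%N -> (j < n)%N ->
       ah 0%N i j = mxf A i j * (1 + phi 0%N i j) /\ `|phi 0%N i j| <= u) /\
    (forall k i j : nat, (k.+1 <= i < n)%N -> (k.+1 <= j < n)%N ->
       let s := fp_mult ah vphi i k in
       ah k.+1 i j = (ah k i j - s * ah k k j * (1 + theta k i j))
                       * (1 + phi k.+1 i j) /\
       `|theta k i j| <= u /\ `|phi k.+1 i j| <= u /\ `|vphi i k| <= u /\
       `|s| <= 1 /\ `|s * (1 + theta k i j)| <= 1).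

Definition CPhat (beta t n : nat) (A : 'M[R]_n) (ah : nat -> nat -> nat -> R)
  : Prop :=
  A \in unitmx /\ fp_run beta t A ah /\
  (forall k : nat, (k < n)%N -> ah k k k != 0) /\
  (forall k i j : nat, (k <= i < n)%N -> (k <= j < n)%N ->
     `|ah k i j| <= `|ah k k k|).

Definition fp_growth (n : nat) (ah : nat -> nat -> nat -> R) : R :=
  maxstage n ah / maxentry n (ah 0%N).

Definition GCPhat (beta t n : nat) : \bar R :=
  ereal_sup [set (fp_growth n ah)%:E | ah in
     [set ah | exists A : 'M[R]_n, CPhat beta t A ah]].

End GE.

From HB Require Import structures.
From mathcomp Require Import all_boot all_order all_algebra.
From mathcomp Require Import all_classical all_reals.
From mathcomp Require Import ereal.
From mathcomp Require Import lra ring zify.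
Set Implicit Arguments.
Unset Strict Implicit.
Unset Printing Implicit Defensive.
Import Order.TTheory GRing.Theory Num.Theory.
Local Open Scope ring_scope.

(* A floating-point run in \hat{CP}_n is a perturbed elimination: it stays
   completely pivoted and its k-th step differs from an exact elimination step
   by at most 5u|p_k|, p_k the k-th pivot.  Such a run is, up to a factor
   1 - eps, the exact elimination of a genuine matrix of CP_n: read the LU
   factors off the run and scale row i by 1 - eta_0 - ... - eta_(i-1), where
   eta_k |p_k| bounds what the stages k.. add to an entry.  Hence every pivot
   ratio p_k / p_0 is at most g[CP_n] / (1 - eps).  Now
   eps = 5u sum_(k <= k') p_k' / p_k, and p_k' / p_k is a pivot ratio of the
   run restricted to the stages k..k'; by induction on n it is at most
   (1 + C) g[CP_(k'-k+1)].  The hypothesis on t makes the resulting bound on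
   eps at most C / (1 + C), so that 1 / (1 - eps) <= 1 + C. *)

Section PerturbedElimination.
Variable R : realType.
Implicit Types (a : nat -> nat -> nat -> R) (δ : R).

Definition piv a k := `|a k k k|.

Definition completely_pivoted n a := forall k i j : nat,
  (k <= i < n)%N -> (k <= j < n)%N -> `|a k i j| <= piv a k.

Definition perturbed_elim δ n a :=
  [/\ forall k, (k < n)%N -> a k k k != 0,
      completely_pivoted n a &
      forall k i j, (k < i < n)%N -> (k < j < n)%N ->
        `|a k.+1 i j - (a k i j - a k i k * a k k j / a k k k)| <= δ * piv a k].

Lemma maxstage_pivoted n a : completely_pivoted n a ->
  maxstage n a = \big[Num.max/0]_(k < n) piv a k.
Proof.
move=> cp; apply: eq_bigr => k _; apply/le_anti/andP; split.
  apply: bigmax_le => [|i ki]; first exact: normr_ge0.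
  apply: bigmax_le => [|j kj]; first exact: normr_ge0.
  by apply: cp; rewrite ?ki ?kj ltn_ord.
by apply: (bigmax_sup k) => //; apply: (bigmax_sup k).
Qed.

Lemma maxentry_pivoted n a : (0 < n)%N -> completely_pivoted n a ->
  maxentry n (a 0%N) = piv a 0.
Proof.
move=> n0 cp; apply/le_anti/andP; split.
  apply: bigmax_le => [|i _]; first exact: normr_ge0.
  apply: bigmax_le => [|j _]; first exact: normr_ge0.
  by apply: cp; rewrite ltn_ord.
by apply: (bigmax_sup (Ordinal n0)) => //; apply: (bigmax_sup (Ordinal n0)).
Qed.

Section Witness.
Variables (δ : R) (n : nat) (a : nat -> nat -> nat -> R).

(* [budget k * piv a k] bounds what the stages [k..] of the run add to an
   entry; row [i] of the witness is scaled by [row_scale i] to absorb the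
   budgets of the stages before [i]. *)
Definition budget k := δ * (\sum_(k <= k' < n.-1) piv a k') / piv a k.
Definition total_budget := \sum_(0 <= k < n.-1) budget k.
Definition row_scale k := 1 - \sum_(0 <= k' < k) budget k'.

Definition lower_factor i k : R :=
  if (k < i)%N then row_scale i * a k i k / (row_scale k * a k k k) else (i == k)%:R.
Definition upper_factor k j : R := if (k <= j)%N then row_scale k * a k k j else 0.

Definition witness : 'M[R]_n :=
  \matrix_(i, j) \sum_(k < n) lower_factor i k * upper_factor k j.

Hypotheses (δ_ge0 : 0 <= δ) (pert : perturbed_elim δ n a).
Hypothesis total_budget_lt1 : total_budget < 1.

Lemma piv_neq0 k : (k < n)%N -> a k k k != 0.
Proof. by case: pert => + _ _; apply. Qed.

Lemma piv_gt0 k : (k < n)%N -> 0 < piv a k.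
Proof. by move=> kn; rewrite normr_gt0 piv_neq0. Qed.

Lemma budget_ge0 k : 0 <= budget k.
Proof.
rewrite /budget !mulr_ge0 ?invr_ge0 ?normr_ge0 //.
by apply: sumr_ge0 => *; apply: normr_ge0.
Qed.

Lemma row_scale0 : row_scale 0 = 1.
Proof. by rewrite /row_scale big_geq // subr0. Qed.

Lemma row_scaleS k : row_scale k.+1 = row_scale k - budget k.
Proof. by rewrite /row_scale big_nat_recr //= opprD addrA. Qed.

Lemma row_scale_le1 k : row_scale k <= 1.
Proof.
by rewrite /row_scale lerBlDr lerDl; apply: sumr_ge0 => *; apply: budget_ge0.
Qed.

Lemma row_scale_homo k i : (k <= i)%N -> row_scale i <= row_scale k.
Proof.
move=> ki; rewrite /row_scale lerD2l lerN2 (big_cat_nat (leq0n k) ki) /= lerDl.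
by apply: sumr_ge0 => *; apply: budget_ge0.
Qed.

Lemma row_scale_ge k : (k < n)%N -> 1 - total_budget <= row_scale k.
Proof.
move=> kn; rewrite /row_scale /total_budget lerD2l lerN2.
rewrite [leRHS](big_cat_nat (leq0n k)) /=; last by lia.
by rewrite lerDl; apply: sumr_ge0 => *; apply: budget_ge0.
Qed.

Lemma row_scale_gt0 k : (k < n)%N -> 0 < row_scale k.
Proof. by move=> kn; have := row_scale_ge kn; have := total_budget_lt1; lra. Qed.

Lemma upper_factor_neq0 k : (k < n)%N -> upper_factor k k != 0.
Proof.
by move=> kn; rewrite /upper_factor leqnn mulf_neq0 ?piv_neq0 // gt_eqF ?row_scale_gt0.
Qed.

Lemma factor_sum_pivot_row k j : (k < n)%N ->
  \sum_(k <= k' < n) lower_factor k k' * upper_factor k' j = upper_factor k j.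
Proof.
move=> kn; rewrite (big_ltn kn) big_nat_cond big1 ?addr0.
  by rewrite /lower_factor ltnn eqxx mul1r.
move=> k' /andP[/andP[kk' _] _].
by rewrite /lower_factor ltnNge (ltnW kk') /= eq_sym (gtn_eqF kk') mul0r.
Qed.

Lemma factor_sum_pivot_col i k : (k < n)%N ->
  \sum_(k <= k' < n) lower_factor i k' * upper_factor k' k =
  lower_factor i k * upper_factor k k.
Proof.
move=> kn; rewrite (big_ltn kn) big_nat_cond big1 ?addr0 // => k' /andP[/andP[kk' _] _].
by rewrite /upper_factor leqNgt kk' mulr0.
Qed.

(* Exact elimination peels off the leading terms of the factorization. *)
Lemma ge_witness k i j : (k <= i < n)%N -> (k <= j < n)%N ->
  ge witness k i j = \sum_(k <= k' < n) lower_factor i k' * upper_factor k' j.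
Proof.
elim: k i j => [|k IH] i j /andP[ki ih] /andP[kj jh].
  by rewrite /= /mxf !insubT /= mxE big_mkord.
have kn : (k < n)%N by lia.
rewrite /= !IH ?kn ?(ltnW ki) ?(ltnW kj) ?ih ?jh ?leqnn //.
rewrite factor_sum_pivot_col // !factor_sum_pivot_row // (big_ltn kn).
by field; rewrite upper_factor_neq0.
Qed.

Lemma ge_witness_row k j : (k <= j < n)%N -> ge witness k k j = row_scale k * a k k j.
Proof.
move=> kjn; rewrite ge_witness ?factor_sum_pivot_row; try lia.
by rewrite /upper_factor; case/andP: kjn => ->.
Qed.

Lemma ge_witness_piv k : (k < n)%N -> ge witness k k k = row_scale k * a k k k.
Proof. by move=> kn; rewrite ge_witness_row // leqnn. Qed.

Lemma ge_witness_col k i : (k < i < n)%N -> ge witness k i k = row_scale i * a k i k.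
Proof.
move=> kin; have kn : (k < n)%N by lia.
rewrite ge_witness ?factor_sum_pivot_col; try lia.
rewrite /lower_factor /upper_factor leqnn; case/andP: kin => -> _.
by rewrite divfK // mulf_neq0 ?piv_neq0 // gt_eqF ?row_scale_gt0.
Qed.

Lemma ge_witness_trailing k i j : (i < n)%N -> (j < n)%N -> (k <= minn i j)%N ->
  `|ge witness k i j / row_scale i - a k i j| <=
  δ * \sum_(k <= k' < minn i j) piv a k'.
Proof.
move=> ih jh; have gi := lt0r_neq0 (row_scale_gt0 ih).
move ek: (minn i j - k)%N => r; elim: r k ek => [|r IH] k ek km.
  have -> : k = minn i j by lia.
  rewrite big_geq // mulr0 normr_le0 subr_eq0; case: (leqP i j) => ij.
    by rewrite ge_witness_row ?ij ?jh // mulrC mulKf.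
  by rewrite ge_witness_col ?ij ?ih // mulrC mulKf.
have kn : (k < n)%N by lia.
have step : ge witness k i j / row_scale i =
    a k i k * a k k j / a k k k + ge witness k.+1 i j / row_scale i.
  rewrite !ge_witness ?ih ?jh; try lia.
  rewrite (big_ltn kn); set S := \sum_(_ <= _ < _) _.
  rewrite /lower_factor /upper_factor.
  have -> : (k < i)%N by lia.
  have -> : (k <= j)%N by lia.
  by field; rewrite gi piv_neq0 // lt0r_neq0 ?row_scale_gt0.
rewrite step (big_ltn (_ : k < minn i j)%N); last by lia.
rewrite mulrDr [leRHS]addrC.
have -> : a k i k * a k k j / a k k k + ge witness k.+1 i j / row_scale i - a k i j =
  (ge witness k.+1 i j / row_scale i - a k.+1 i j) +
  (a k.+1 i j - (a k i j - a k i k * a k k j / a k k k)) by ring.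
apply: le_trans (ler_normD _ _) _; apply: lerD; first by apply: IH; lia.
by case: pert => _ _; apply; lia.
Qed.

(* Since [row_scale i <= row_scale k - budget k], the accumulated perturbation
   [budget k * piv a k] of a trailing entry is paid for by the scaling. *)
Lemma ge_witness_trailing_le k i j : (k < i < n)%N -> (k < j < n)%N ->
  `|ge witness k i j| <= row_scale k * piv a k.
Proof.
move=> kin kjn; have kn : (k < n)%N by lia.
have [ih jh] : (i < n)%N /\ (j < n)%N by lia.
have gi := row_scale_gt0 ih.
have := @ge_witness_trailing k i j ih jh (_ : k <= minn i j)%N.
set h := _ / row_scale i - _ => /(_ ltac:(lia)) err.
have -> : ge witness k i j = row_scale i * (a k i j + h).
  by rewrite /h; field; rewrite lt0r_neq0.
have spent : δ * \sum_(k <= k' < minn i j) piv a k' <= budget k * piv a k.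
  rewrite /budget divfK ?gt_eqF ?piv_gt0 // ler_wpM2l //.
  rewrite [leRHS](big_cat_nat (_ : k <= minn i j)%N) /=; try lia.
  by rewrite lerDl; apply: sumr_ge0 => *; apply: normr_ge0.
have entry : `|a k i j + h| <= piv a k + budget k * piv a k.
  apply: le_trans (ler_normD _ _) _; apply: lerD; last exact: le_trans err spent.
  by case: pert => _ cp _; apply: cp; lia.
have gik : row_scale i <= row_scale k - budget k.
  by rewrite -row_scaleS; apply: row_scale_homo; lia.
have := budget_ge0 k; have := row_scale_le1 k; have := normr_ge0 (a k k k).
rewrite normrM gtr0_norm // -/(piv a k) => p0 g1 e0.
apply: le_trans (ler_wpM2l (ltW gi) entry) _.
apply: le_trans (_ : (row_scale k - budget k) * (piv a k + budget k * piv a k) <= _).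
  by apply: ler_wpM2r => //; apply: addr_ge0 => //; apply: mulr_ge0.
have := mulr_ge0 (mulr_ge0 p0 e0) (_ : 0 <= 1 + budget k - row_scale k); nra.
Qed.

Lemma witness_completely_pivoted : completely_pivoted n (ge witness).
Proof.
move=> k i j /andP[ki ih] /andP[kj jh]; have kn : (k < n)%N by lia.
have gk := row_scale_gt0 kn.
have cp : forall i' j', (k <= i' < n)%N -> (k <= j' < n)%N -> `|a k i' j'| <= piv a k.
  by case: pert => _ cpa _; apply: cpa.
rewrite /piv ge_witness_piv // normrM gtr0_norm // -/(piv a k).
have [<-|nki] := eqVneq k i.
  rewrite ge_witness_row ?kj ?jh // normrM gtr0_norm // ler_pM2l //.
  by apply: cp; lia.
have [<-|nkj] := eqVneq k j.
  rewrite ge_witness_col; last by lia.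
  rewrite normrM gtr0_norm ?row_scale_gt0 //.
  apply: ler_pM; [exact: ltW (row_scale_gt0 ih) | exact: normr_ge0 | |].
    exact: row_scale_homo.
  by apply: cp; lia.
by apply: ge_witness_trailing_le; lia.
Qed.

Lemma witness_unit : witness \in unitmx.
Proof.
pose L : 'M[R]_n := \matrix_(i, k) lower_factor i k.
pose U : 'M[R]_n := \matrix_(k, j) upper_factor k j.
have -> : witness = L *m U.
  by apply/matrixP => i j; rewrite !mxE; apply: eq_bigr => k _; rewrite !mxE.
rewrite unitmxE det_mulmx unitfE mulf_neq0 //.
  rewrite det_trig; last first.
    apply/is_trig_mxP => i j ij.
    by rewrite mxE /lower_factor ltnNge (ltnW ij) /= ltn_eqF.
  by rewrite big1 ?oner_neq0 // => i _; rewrite mxE /lower_factor ltnn eqxx.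
rewrite -det_tr det_trig; last first.
  by apply/is_trig_mxP => i j ij; rewrite !mxE /upper_factor leqNgt ij.
by apply/prodf_neq0 => i _; rewrite !mxE upper_factor_neq0.
Qed.

Lemma witness_CP : CP witness.
Proof.
split; [exact: witness_unit | split; last exact: witness_completely_pivoted].
move=> k kn; rewrite ge_witness_piv ?mulf_neq0 ?piv_neq0 ?lt0r_neq0 ?row_scale_gt0 //.
all: lia.
Qed.

Lemma witness_growth k : (k < n)%N ->
  (1 - total_budget) * (piv a k / piv a 0) <= growth witness.
Proof.
move=> kn; have n0 : (0 < n)%N by lia.
have pivB k' : (k' < n)%N -> piv (ge witness) k' = row_scale k' * piv a k'.
  by move=> k'n; rewrite /piv ge_witness_piv // normrM gtr0_norm ?row_scale_gt0.
have cpB := witness_completely_pivoted.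
rewrite /growth -[mxf witness]/(ge witness 0) maxstage_pivoted // maxentry_pivoted //.
rewrite pivB // row_scale0 mul1r mulrA ler_pM2r ?invr_gt0 ?piv_gt0 //.
apply: (bigmax_sup (Ordinal kn)) => //=; rewrite pivB //.
by rewrite ler_wpM2r ?normr_ge0 ?row_scale_ge.
Qed.

End Witness.
End PerturbedElimination.

Section PivotRatios.
Variable R : realType.
Implicit Types (a : nat -> nat -> nat -> R) (δ C : R) (g : nat -> R).

Lemma growth_le_gCP n (B : 'M[R]_n) : CP B -> ((growth B)%:E <= gCP R n)%E.
Proof. by move=> CPB; apply: ereal_sup_ubound; exists B. Qed.

Lemma gCP_ge1 m : (0 < m)%N -> (1%:E <= gCP R m)%E.
Proof.
move=> m0; pose a (k i j : nat) : R := (i == j)%:R.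
have pert : perturbed_elim 0 m a.
  split=> [k _|k i j _ _|k i j ki kj]; first by rewrite /a eqxx oner_neq0.
    by rewrite /piv /a eqxx normr1; case: (i == j); rewrite ?normr1 ?normr0.
  have -> : a k i k = 0 by rewrite /a; case: eqP => //; lia.
  by rewrite !mul0r subr0 /a subrr normr0.
have total_budget0 : total_budget 0 m a = 0.
  by rewrite /total_budget big1 // => k _; rewrite /budget !mul0r.
have budget_lt1 : total_budget 0 m a < 1 by rewrite total_budget0 ltr01.
have := witness_growth (lexx 0) pert budget_lt1 m0.
rewrite total_budget0 subr0 mul1r divff ?lt0r_neq0 ?(piv_gt0 pert) // => grow.
apply: le_trans (growth_le_gCP (witness_CP (lexx 0) pert budget_lt1)).
by rewrite lee_fin.
Qed.

Lemma pivot_ratio_le_gCP C δ n a : 0 <= δ -> 0 < C -> perturbed_elim δ n a ->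
  total_budget δ n a <= C / (1 + C) ->
  forall k, (k < n)%N -> ((piv a k / piv a 0)%:E <= (1 + C)%:E * gCP R n)%E.
Proof.
move=> δ0 C0 pert budgetC k kn.
have budget_bound : total_budget δ n a * (1 + C) <= C by rewrite -ler_pdivlMr; lra.
have total_budget_lt1 : total_budget δ n a < 1.
  by apply: le_lt_trans budgetC _; rewrite ltr_pdivrMr; lra.
have ratio0 : 0 <= piv a k / piv a 0 by rewrite divr_ge0 ?normr_ge0.
apply: le_trans (lee_wpmul2l _ (growth_le_gCP (witness_CP δ0 pert total_budget_lt1))).
  rewrite -EFinM lee_fin.
  apply: le_trans (ler_wpM2l _ (witness_growth δ0 pert total_budget_lt1 kn)); last lra.
  by rewrite mulrA -[leLHS]mul1r ler_wpM2r //; lra.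
by rewrite lee_fin; lra.
Qed.

(* [g] is evaluated at the length [k' - k + 1] of the sub-run from stage [k]
   to stage [k']: [g m] stands for a bound on g[CP_m]. *)
Definition gap_sum g n := \sum_(0 <= k < n.-1) \sum_(k <= k' < n.-1) g (k' - k).+1.

Lemma gap_sum_homo g : (forall m, 0 <= g m.+1) ->
  {homo gap_sum g : m n / (m <= n)%N >-> m <= n}.
Proof.
move=> g0 m n mn; rewrite /gap_sum.
have sum_ge0 k : 0 <= \sum_(k <= k' < n.-1) g (k' - k).+1 by apply: sumr_ge0.
rewrite [leRHS](big_cat_nat (leq0n m.-1)) /=; last by lia.
rewrite -[leLHS]addr0 lerD ?sumr_ge0 //; apply: ler_sum_nat => k km.
rewrite [leRHS](big_cat_nat (_ : k <= m.-1)%N (_ : m.-1 <= n.-1)%N) /=; try lia.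
by rewrite lerDl sumr_ge0.
Qed.

Lemma total_budget_le_gap_sum c δ n a g : 0 <= δ ->
  (forall k k', (k <= k' < n.-1)%N -> piv a k' / piv a k <= c * g (k' - k).+1) ->
  total_budget δ n a <= δ * c * gap_sum g n.
Proof.
move=> δ0 ratio; rewrite /total_budget /gap_sum mulr_sumr.
apply: ler_sum_nat => k kn; rewrite /budget -mulrA -[δ * c * _]mulrA ler_wpM2l //.
rewrite mulr_suml mulr_sumr; apply: ler_sum_nat => k' kk'.
by apply: ratio; lia.
Qed.

Lemma perturbed_elim_shift δ n a k m : perturbed_elim δ n a -> (m + k <= n)%N ->
  perturbed_elim δ m (fun s i j => a (s + k)%N (i + k)%N (j + k)%N).
Proof.
case=> pivs cp step mk; split=> [s sm|s i j hi hj|s i j hi hj].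
- by apply: pivs; lia.
- by apply: cp; lia.
- by rewrite addSn; apply: step; lia.
Qed.

(* Induction on [n]: the ratio [piv a k' / piv a k] is a pivot ratio of the
   shorter run starting at stage [k]. *)
Lemma pivot_ratio_le C δ g : 0 <= δ -> 0 < C -> (forall m, 0 <= g m.+1) ->
  forall n a, perturbed_elim δ n a ->
  δ * (1 + C) * gap_sum g n <= C / (1 + C) ->
  (forall m, (0 < m < n)%N -> (gCP R m <= (g m)%:E)%E) ->
  forall k, (k < n)%N -> ((piv a k / piv a 0)%:E <= (1 + C)%:E * gCP R n)%E.
Proof.
move=> δ0 C0 g0; elim/ltn_ind => n IH a pert small gCPg.
apply: (pivot_ratio_le_gCP δ0 C0 pert); apply: (le_trans _ small).
apply: total_budget_le_gap_sum => // k k' kk'.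
pose m := (k' - k).+1; have mE : m = (k' - k).+1 by [].
clearbody m; have mn : (m < n)%N by lia.
have shifted := perturbed_elim_shift (k := k) (m := m) pert (_ : m + k <= n)%N.
have small_m : δ * (1 + C) * gap_sum g m <= C / (1 + C).
  apply: (le_trans _ small); apply: ler_wpM2l; first by apply: mulr_ge0; lra.
  exact: gap_sum_homo g0 _ _ (ltnW mn).
have gCPg_m m' : (0 < m' < m)%N -> (gCP R m' <= (g m')%:E)%E.
  by move=> m'm; apply: gCPg; lia.
have := IH m mn _ (shifted _) small_m gCPg_m (k' - k)%N (_ : k' - k < m)%N.
rewrite /piv /= add0n subnK; try lia.
move=> /(_ ltac:(lia) ltac:(lia)) /le_trans /(_ (lee_wpmul2l _ (gCPg m _))) ratio.
by have := ratio ltac:(rewrite lee_fin; lra) ltac:(lia); rewrite -EFinM lee_fin mE.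
Qed.
End PivotRatios.

Section FloatingPointRuns.
Variable R : realType.

(* With [s := c / d * (1 + v)], the error equals
   [ph * (x - s (1 + th) y) - y s (th + v / (1 + v))]; its two terms are at most
   [2 u |d|] and [3 u |d|]. *)
Lemma fp_step_error (u x y c d th ph v : R) :
  0 <= u -> u <= 1/2 -> d != 0 -> `|x| <= `|d| -> `|y| <= `|d| ->
  `|th| <= u -> `|ph| <= u -> `|v| <= u ->
  `|c / d * (1 + v)| <= 1 -> `|c / d * (1 + v) * (1 + th)| <= 1 ->
  `|(x - c / d * (1 + v) * y * (1 + th)) * (1 + ph) - (x - c * y / d)| <= 5 * u * `|d|.
Proof.
move=> u0 u12 d0 hx hy hth hph hv hs hst; set s := c / d * (1 + v).
have hv1 : 1/2 <= `|1 + v|.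
  have := ler_normD (1 + v) (- v); rewrite addrK normrN normr1; lra.
have v1 : 1 + v != 0 by rewrite -normr_gt0; lra.
have -> : (x - s * y * (1 + th)) * (1 + ph) - (x - c * y / d) =
    ph * (x - s * (1 + th) * y) - y * s * (th + v / (1 + v)).
  by rewrite /s; field; rewrite d0 v1.
apply: le_trans (ler_normB _ _) _.
have rounding : `|ph * (x - s * (1 + th) * y)| <= u * (2 * `|d|).
  rewrite normrM; apply: ler_pM => //.
  apply: le_trans (ler_normB _ _) _; rewrite normrM.
  have : `|s * (1 + th)| * `|y| <= `|d|.
    by rewrite -[leRHS]mul1r; apply: ler_pM => //.
  lra.
have rel_v : `|v / (1 + v)| <= 2 * u.
  rewrite normrM normfV ler_pdivrMr; last lra.
  have : 0 <= u * (`|1 + v| - 1/2) by apply: mulr_ge0; lra.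
  nra.
have mult : `|y * s * (th + v / (1 + v))| <= `|d| * (3 * u).
  rewrite normrM (normrM y s); apply: ler_pM => //.
    by rewrite -[leRHS]mulr1; apply: ler_pM => //.
  apply: le_trans (ler_normD _ _) _; lra.
lra.
Qed.

Lemma CPhat_perturbed_elim beta t n (A : 'M[R]_n) ah :
  let u := unit_roundoff R beta t in
  0 <= u -> ((1 < n)%N -> u <= 1/2) -> CPhat beta t A ah -> perturbed_elim (5 * u) n ah.
Proof.
move=> u u0 u12 [_ [[th [ph [vp [_ step]]]] [pivs cp]]].
split=> [//|k i j ki kj|k i j ki kj]; first exact: cp.
have [-> [hth [hph [hv [hs hst]]]]] := step k i j ki kj.
rewrite /fp_mult in hs hst *.
apply: fp_step_error => //; rewrite ?pivs ?cp //; try lia.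
Qed.

Lemma fp_growth_le n (ah : nat -> nat -> nat -> R) (x : \bar R) :
  (0 < n)%N -> completely_pivoted n ah -> 0 < piv ah 0 ->
  (forall k, (k < n)%N -> ((piv ah k / piv ah 0)%:E <= x)%E) ->
  ((fp_growth n ah)%:E <= x)%E.
Proof.
move=> n0 cp p0; rewrite /fp_growth maxstage_pivoted // maxentry_pivoted //.
case: x => [x| |] ratio; last 2 first.
- by rewrite leey.
- by have := ratio 0%N n0; rewrite leeNy_eq.
have ratio' k : (k < n)%N -> piv ah k <= x * piv ah 0.
  by move=> kn; have := ratio k kn; rewrite lee_fin ler_pdivrMr.
rewrite lee_fin ler_pdivrMr //; apply: bigmax_le => [|k _]; last exact: ratio'.
by apply: le_trans (ratio' 0%N n0); apply: normr_ge0.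
Qed.

Lemma GCPhat_le beta t n C (g : nat -> R) :
  let u := unit_roundoff R beta t in
  (0 < n)%N -> 0 < C -> (forall m, 0 <= g m.+1) ->
  (forall m, (0 < m < n)%N -> (gCP R m <= (g m)%:E)%E) ->
  0 <= u -> ((1 < n)%N -> u <= 1/2) -> 5 * u * (1 + C) * gap_sum g n <= C / (1 + C) ->
  (GCPhat R beta t n <= (1 + C)%:E * gCP R n)%E.
Proof.
move=> u n0 C0 g0 gCPg u0 u12 small.
apply: ge_ereal_sup => _ [ah [A HA] <-].
have pert := CPhat_perturbed_elim u0 u12 HA.
have [pivs cp _] := pert.
apply: fp_growth_le => //; first by rewrite normr_gt0 pivs.
by apply: (pivot_ratio_le _ C0 g0 pert); rewrite ?mulr_ge0.
Qed.
End FloatingPointRuns.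

Section MantissaCondition.
Variable R : realType.

Lemma lee_sum_nat_term (f : nat -> \bar R) a b i :
  (forall j, (a <= j < b)%N -> (0 <= f j)%E) -> (a <= i < b)%N ->
  (f i <= \sum_(a <= j < b) f j)%E.
Proof.
move=> f0 iab; rewrite (bigD1_seq i) ?mem_index_iota ?iota_uniq //= leeDl //.
by rewrite big_seq_cond sume_ge0 // => j /andP[+ _]; rewrite mem_index_iota; apply: f0.
Qed.

Lemma gCP_ge0 m : (0 < m)%N -> (0 <= gCP R m)%E.
Proof. by move=> m0; apply: le_trans lee01 (gCP_ge1 R m0). Qed.

Definition gCP_sum n :=
  (\sum_(1 <= m < n) \sum_(1 <= l < (n - m).+1) (gCP R l * gCP R m))%E.

Lemma gCP_sum_ge0 n : (0 <= gCP_sum n)%E.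
Proof.
rewrite /gCP_sum big_nat_cond sume_ge0 // => m /andP[/andP[m1 _] _].
rewrite big_nat_cond sume_ge0 // => l /andP[/andP[l1 _] _].
by rewrite mule_ge0 ?gCP_ge0.
Qed.

Lemma gCP_le_gCP_sum n m : (0 < m < n)%N -> (gCP R m <= gCP_sum n)%E.
Proof.
move=> mn; have m0 : (0 < m)%N by lia.
have prod_ge0 l m' : (0 < l)%N -> (0 < m')%N -> (0 <= gCP R l * gCP R m')%E.
  by move=> l0 m'0; rewrite mule_ge0 ?gCP_ge0.
apply: (le_trans (y := (gCP R 1 * gCP R m)%E)).
  by rewrite -[leLHS]mul1e lee_wpmul2r ?gCP_ge0 ?gCP_ge1.
apply: (le_trans (y := (\sum_(1 <= l < (n - m).+1) gCP R l * gCP R m)%E)).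
  apply: (lee_sum_nat_term (f := fun l => gCP R l * gCP R m)%E); last by lia.
  by move=> l /andP[l1 _]; apply: prod_ge0.
apply: (lee_sum_nat_term
  (f := fun m' => \sum_(1 <= l < (n - m').+1) gCP R l * gCP R m')%E); last by lia.
move=> m' /andP[m'1 _]; rewrite big_nat_cond sume_ge0 // => l /andP[/andP[l1 _] _].
exact: prod_ge0.
Qed.

Lemma gCP_sum_ge1 n : (1 < n)%N -> (1 <= gCP_sum n)%E.
Proof.
by move=> n1; apply: le_trans (gCP_ge1 R (ltn0Sn 0)) (gCP_le_gCP_sum (_ : 0 < 1 < n)%N).
Qed.

Lemma gCP_fin_num (K P : R) n m : 0 < K -> (K%:E * gCP_sum n <= P%:E)%E ->
  (0 < m < n)%N -> gCP R m \is a fin_num.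
Proof.
move=> K0 hyp mn; rewrite ge0_fin_numE ?gCP_ge0 //; last by lia.
apply: le_lt_trans (gCP_le_gCP_sum mn) _; rewrite ltey; apply/eqP => sum_oo.
by move: hyp; rewrite sum_oo gt0_muley ?leye_eq ?lte_fin.
Qed.

Lemma gCP_sumE n (g : nat -> R) : (forall m, (0 < m < n)%N -> gCP R m = (g m)%:E) ->
  gCP_sum n = (\sum_(1 <= m < n) \sum_(1 <= l < (n - m).+1) g l * g m)%:E.
Proof.
move=> gE; rewrite /gCP_sum -sumEFin; apply: eq_big_nat => m mn; rewrite -sumEFin.
by apply: eq_big_nat => l ln; rewrite !gE ?EFinM //; lia.
Qed.

Lemma gap_sumE (g : nat -> R) n :
  gap_sum g n = \sum_(1 <= m < n) \sum_(1 <= l < (n - m).+1) g l.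
Proof.
rewrite /gap_sum (big_addn 0 n 1) -subn1; apply: eq_big_nat => k kn.
rewrite -{1}(add0n k) (big_addn 0 _ k) (big_addn 0 _ 1).
have -> : (n - 1 - k = (n - (k + 1)).+1 - 1)%N by lia.
by apply: eq_big_nat => i _; rewrite addnK addn1.
Qed.

Lemma gap_sum_le_sum_prod (g : nat -> R) n : (forall m, (0 < m < n)%N -> 1 <= g m) ->
  gap_sum g n <= \sum_(1 <= m < n) \sum_(1 <= l < (n - m).+1) g l * g m.
Proof.
move=> g1; rewrite gap_sumE; apply: ler_sum_nat => m mn; apply: ler_sum_nat => l ln.
rewrite -[leLHS]mulr1 ler_wpM2l ?g1 //.
by apply: le_trans ler01 (g1 _ _); lia.
Qed.

Lemma unit_roundoff_mul_pow beta t : (0 < beta)%N ->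
  unit_roundoff R beta t * beta%:R ^ (t%:Z - 1) = 1 / 2.
Proof.
move=> beta0; rewrite /unit_roundoff -[1 - _]opprB -invr_expz mulrAC mulVf //.
by rewrite expfz_neq0 // pnatr_eq0 -lt0n.
Qed.

Lemma roundoff_small (u P S W C : R) : 0 < C -> 0 <= W -> W <= S ->
  (1 + C) * (4 + 5 * C) / C * S <= P -> u * P = 1 / 2 -> 0 <= u ->
  5 * u * (1 + C) * W <= C / (1 + C).
Proof.
move=> C0 W0 WS hyp uP u0.
set K := (1 + C) * (4 + 5 * C) / C in hyp.
have KC : K * C = (1 + C) * (4 + 5 * C) by rewrite divfK ?gt_eqF.
have Su : (1 + C) * (4 + 5 * C) * (S * u) <= C / 2.
  have := ler_wpM2l (ltW C0) (ler_wpM2r u0 hyp).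
  rewrite [P * u]mulrC uP -KC (_ : K * C * (S * u) = C * (K * S * u)); first lra.
  by ring.
have := ler_wpM2l u0 WS; rewrite ler_pdivlMr; last lra.
have : 0 <= (1 + C) * (S * u) by rewrite !mulr_ge0 //; lra.
nra.
Qed.

Lemma roundoff_le_half (u P S C : R) : 0 < C -> 1 <= S ->
  (1 + C) * (4 + 5 * C) / C * S <= P -> u * P = 1 / 2 -> 0 <= u -> u <= 1 / 2.
Proof.
move=> C0 S1 hyp uP u0.
have K1 : 1 <= (1 + C) * (4 + 5 * C) / C by rewrite ler_pdivlMr // mul1r; nra.
have : 1 <= P by nra.
nra.
Qed.
End MantissaCondition.

Theorem mainTheorem9 (R : realType) (beta t n : nat) (C : R) :
  (2 <= beta)%N -> (0 < n)%N -> 0 < C -> C < 1 ->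
  ((((1 + C) * (4 + 5 * C) / C)%:E *
    \sum_(1 <= m < n) \sum_(1 <= l < (n - m).+1) (gCP R l * gCP R m))
   <= ((beta%:R : R) ^ (t%:Z - 1))%:E)%E ->
  (GCPhat R beta t n <= (1 + C)%:E * gCP R n)%E.
Proof.
move=> beta2 n0 C0 _; rewrite -/(gCP_sum R n) => hyp.
have K0 : 0 < (1 + C) * (4 + 5 * C) / C by rewrite divr_gt0 ?mulr_gt0 //; lra.
have uP : unit_roundoff R beta t * beta%:R ^ (t%:Z - 1) = 1 / 2.
  by apply: unit_roundoff_mul_pow; lia.
have u0 : 0 <= unit_roundoff R beta t.
  rewrite -(pmulr_lge0 _ (_ : 0 < beta%:R ^ (t%:Z - 1))) ?uP ?exprz_gt0 ?ltr0n //.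
  lia.
pose g m := fine (gCP R m).
have gE m : (0 < m < n)%N -> gCP R m = (g m)%:E.
  by move=> mn; rewrite fineK // (gCP_fin_num K0 hyp mn).
have g1 m : (0 < m < n)%N -> 1 <= g m.
  by move=> mn; rewrite -lee_fin -gE ?gCP_ge1 //; lia.
have := gCP_sum_ge1 R (n := n); have := gCP_sum_ge0 R n.
rewrite (gCP_sumE gE) -EFinM lee_fin in hyp *; rewrite lee_fin => S0 S1.
apply: (GCPhat_le (g := g)) => //.
- by move=> m; apply/fine_ge0/gCP_ge0.
- by move=> m /gE ->.
- by move=> n1; apply: roundoff_le_half hyp uP u0; rewrite // -lee_fin S1.
- apply: roundoff_small hyp uP u0 => //; last exact: gap_sum_le_sum_prod g1.
  by apply: sumr_ge0 => k _; apply: sumr_ge0 => k' _; apply/fine_ge0/gCP_ge0.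
Qed.
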